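(* Every graph $G$ with $n$ vertices has an $xy^+$-monotone EPG-representation in a $3n\times 2n$-grid.
   Context: The $w\times h$-grid consists of all grid-points $(i,j)$ with integer coordinates $1\le i\le w$, $1\le j\le h$, and all grid-edges joining grid-points at distance $1$. An EPG-representation of a graph $G$ assigns to each vertex $v$ a path $\mathrm{path}(v)$ in the grid such that $(v,w)$ is an edge of $G$ if and only if $\mathrm{path}(v)$ and $\mathrm{path}(w)$ share a grid-edge. A grid path is $xy$-monotone if every vertical line and every horizontal line meeting it meets it in a single interval; it is $xy^+$-monotone if it is $xy$-monotone and its left endpoint is not above its right endpoint. An $xy^+$-monotone EPG-representation is one in which all vertex-paths are $xy^+$-monotone. *)

From mathcomp Require Import all_boot.
Set Implicit Arguments. Unset Strict Implicit. Unset Printing Implicit Defensive.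

Definition gpoint := (nat * nat)%type.

Definition in_grid (w h : nat) (p : gpoint) : bool :=
  (1 <= p.1 <= w) && (1 <= p.2 <= h).

Definition gadj (p q : gpoint) : bool :=
  ((p.1 == q.1) && ((p.2 == q.2.+1) || (q.2 == p.2.+1))) ||
  ((p.2 == q.2) && ((p.1 == q.1.+1) || (q.1 == p.1.+1))).

Definition grid_path (w h : nat) (s : seq gpoint) : Prop :=
  [/\ s != [::], all (in_grid w h) s, path gadj (head (0,0) s) (behead s)
    & uniq s].

Definition gedges (s : seq gpoint) : seq (gpoint * gpoint) := zip s (behead s).

Definition share_edge (s t : seq gpoint) : bool :=
  has (fun e => (e \in gedges t) || ((e.2, e.1) \in gedges t)) (gedges s).

Definition contiguous (s : seq gpoint) (P : gpoint -> bool) : Prop :=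
  forall i j k, i <= j -> j <= k -> k < size s ->
    P (nth (0,0) s i) -> P (nth (0,0) s k) -> P (nth (0,0) s j).

(* xy-monotone: every vertical line x = c and horizontal line y = c meets the
   path in a single interval (only integer lines can meet vertices). *)
Definition xy_monotone (s : seq gpoint) : Prop :=
  forall c : nat, contiguous s (fun p => p.1 == c) /\ contiguous s (fun p => p.2 == c).

Definition xyp_monotone (s : seq gpoint) : Prop :=
  xy_monotone s /\
  (let a := head (0,0) s in let b := last (0,0) s in
   (a.1 < b.1 -> a.2 <= b.2) /\ (b.1 < a.1 -> b.2 <= a.2)).

Definition xyp_EPG_rep (n : nat) (e : rel 'I_n) (w h : nat)
  (P : 'I_n -> seq gpoint) : Prop :=
  (forall v, grid_path w h (P v) /\ xyp_monotone (P v)) /\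
  (forall u v, u != v -> (e u v <-> share_edge (P u) (P v))).

From mathcomp Require Import all_boot zify.
Set Implicit Arguments. Unset Strict Implicit. Unset Printing Implicit Defensive.

(* Number the vertices 1, ..., n.  Vertex v is drawn as an up-right staircase
   in the columns x = 2v+1, ..., 3v, climbing column 2v+c from height h(c-1) to
   height h(c), followed by the horizontal ray y = 2v from x = 3v+1 to x = 3n.
   Each h(c) is 2c or 2c+1, and it is 2c, the height of the ray of vertex c,
   exactly when c >= v or c is a neighbour of v.  For u < v the only points the
   two paths have in common lie where the staircase of v crosses the ray of u,
   between the columns 2v+u and 2v+u+1; they contain a grid edge, namely the
   horizontal step at height 2u, exactly when u and v are adjacent.  Up-right
   paths are automatically simple and xy^+-monotone, and two of them share a
   grid edge exactly when they share both ends of an up-right step. *)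

Lemma sorted_cat_link (T : eqType) (r : rel T) (x0 : T) (s t : seq T) :
  sorted r s -> sorted r t ->
  (s != [::] -> t != [::] -> r (last x0 s) (head x0 t)) -> sorted r (s ++ t).
Proof.
case: s => [|x s] //= s_r; case: t => [|y t] t_r; first by rewrite cats0.
by move=> /(_ isT isT) link; rewrite cat_path s_r /= link.
Qed.

Lemma path_map_iota (T : Type) (r : rel T) (f : nat -> T) a k :
  (forall i, r (f i) (f i.+1)) -> path r (f a) [seq f i | i <- iota a.+1 k].
Proof. by move=> f_r; elim: k a => //= k IH a; rewrite f_r IH. Qed.

Lemma last_iota a k : last a (iota a.+1 k) = a + k.
Proof. by elim: k a => [|k IH] a /=; rewrite ?addn0 // IH addnS. Qed.

Definition up_right (p q : gpoint) : bool :=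
  (q == (p.1.+1, p.2)) || (q == (p.1, p.2.+1)).

Definition coord_sum (p : gpoint) : nat := p.1 + p.2.

Lemma up_right_gadj p q : up_right p q -> gadj p q.
Proof. by case/orP=> /eqP ->; rewrite /gadj /= !eqxx ?orbT. Qed.

Lemma up_right_coord_sum p q : up_right p q -> coord_sum q = (coord_sum p).+1.
Proof. by case/orP=> /eqP ->; rewrite /coord_sum /= ?addnS. Qed.

Lemma up_right_le p q : up_right p q -> p.1 <= q.1 /\ p.2 <= q.2.
Proof. by case/orP=> /eqP ->. Qed.

Lemma up_right_asym p q : up_right p q -> ~~ up_right q p.
Proof.
move=> /up_right_coord_sum pq; apply/negP=> /up_right_coord_sum; lia.
Qed.

Lemma path_up_right_last x s :
  path up_right x s -> x.1 <= (last x s).1 /\ x.2 <= (last x s).2.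
Proof.
elim: s x => [|y s IH] x //= /andP[/up_right_le [le1 le2] /IH [le1' le2']].
by split; [apply: leq_trans le1' | apply: leq_trans le2'].
Qed.

Lemma path_up_right_coord_sum x s z :
  path up_right x s -> z \in s -> coord_sum x < coord_sum z.
Proof.
move=> x_s; apply/allP: z.
apply: (order_path_min (leT := relpre coord_sum ltn)); first by move=> ? ? ?; apply: ltn_trans.
by apply: sub_path x_s => p q /up_right_coord_sum /= ->.
Qed.

Lemma contiguous_sorted (f : gpoint -> nat) s c :
  sorted (relpre f leq) s -> contiguous s (fun p => f p == c).
Proof.
move=> s_f i j k ij jk ks /eqP fi /eqP fk; apply/eqP.
have f_nth a b : a <= b -> b < size s -> f (nth (0, 0) s a) <= f (nth (0, 0) s b).
  move=> ab bs; apply: (sorted_leq_nth _ _ _ s_f); rewrite ?inE //; last lia.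
  - by move=> ? ? ?; apply: leq_trans.
  - by move=> ?; apply: leqnn.
have := f_nth i j ij; have := f_nth j k jk ks; lia.
Qed.

Section UpRightPath.

Variable s : seq gpoint.
Hypothesis s_up_right : sorted up_right s.

Lemma sorted_up_right_relpre (f : gpoint -> nat) (r : rel nat) :
  (forall p q, up_right p q -> r (f p) (f q)) -> sorted (relpre f r) s.
Proof. by move=> f_r; apply: sub_sorted s_up_right => p q /f_r. Qed.

Lemma up_right_uniq : uniq s.
Proof.
apply: (@sorted_uniq _ (relpre coord_sum ltn)).
- by move=> ? ? ?; apply: ltn_trans.
- by move=> p; apply: ltnn.
by apply: sorted_up_right_relpre => p q /up_right_coord_sum /= ->.
Qed.

Lemma up_right_xyp_monotone : xyp_monotone s.
Proof.
split=> [c|].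
  by split; apply: contiguous_sorted; apply: sorted_up_right_relpre => p q /up_right_le [].
case: s s_up_right => [|x t] //= /path_up_right_last [le1 le2].
by split=> // lt; rewrite ltnNge le1 in lt.
Qed.

End UpRightPath.

(* Coordinate sums increase by one along an up-right path, so two of its points
   forming an up-right step are consecutive on it. *)
Lemma mem_gedges_up_right s p q : sorted up_right s ->
  ((p, q) \in gedges s) = [&& up_right p q, p \in s & q \in s].
Proof.
elim: s => [|x [|y t] IH] /= => [_ | _ | /andP[xy yt]]; first by rewrite andbF.
  rewrite !inE; apply/esym/and3P=> -[+ /eqP px /eqP qx].
  by rewrite px qx => /up_right_coord_sum; lia.
rewrite [gedges _]/= in_cons IH //.
have lt_x z : z \in y :: t -> coord_sum x < coord_sum z.
  by apply: path_up_right_coord_sum; rewrite /= xy.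
have lt_y z : z \in t -> coord_sum y < coord_sum z by apply: path_up_right_coord_sum yt.
have sxy := up_right_coord_sum xy.
apply/idP/and3P=> [/orP[/eqP[-> ->] | /and3P[pq pyt qyt]] | [pq]].
- by rewrite !inE !eqxx orbT.
- by split; rewrite // in_cons ?pyt ?qyt orbT.
have spq := up_right_coord_sum pq.
rewrite !(in_cons x) => /orP[/eqP px | pyt] /orP[/eqP qx | qyt].
- by move: spq; rewrite px qx; lia.
- rewrite in_cons in qyt; case/orP: qyt => [/eqP qy | qt].
    by rewrite px qy eqxx.
  by have := lt_y _ qt; rewrite -px in sxy; lia.
- by have := lt_x _ pyt; rewrite qx in spq; lia.
- by rewrite pq pyt qyt orbT.
Qed.

Lemma share_edge_up_right s t : sorted up_right s -> sorted up_right t ->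
  share_edge s t <->
  exists p q, [/\ up_right p q, p \in s, q \in s, p \in t & q \in t].
Proof.
move=> s_ur t_ur; split.
- case/hasP=> -[p q]; rewrite /= !mem_gedges_up_right // => /and3P[pq ps qs].
  case/orP=> /and3P[qp pt qt]; first by exists p, q.
  by rewrite (negbTE (up_right_asym pq)) in qp.
- case=> p [q [pq ps qs pt qt]]; apply/hasP; exists (p, q).
    by rewrite mem_gedges_up_right ?pq ?ps.
  by apply/orP; left; rewrite mem_gedges_up_right ?pq ?pt.
Qed.

Definition vseg (x a b : nat) : seq gpoint := [seq (x, y) | y <- iota a (b.+1 - a)].
Definition hseg (y a b : nat) : seq gpoint := [seq (x, y) | x <- iota a (b.+1 - a)].

Lemma mem_vseg x a b p : (p \in vseg x a b) = (p.1 == x) && (a <= p.2 <= b).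
Proof.
apply/mapP/andP => [[y yab ->] | [px yab]].
  by move: yab; rewrite mem_iota /= eqxx; lia.
exists p.2; first by rewrite mem_iota; lia.
by case: p px yab => ? ? /= /eqP->.
Qed.

Lemma mem_hseg y a b p : (p \in hseg y a b) = (p.2 == y) && (a <= p.1 <= b).
Proof.
apply/mapP/andP => [[x xab ->] | [py xab]].
  by move: xab; rewrite mem_iota /= eqxx; lia.
exists p.1; first by rewrite mem_iota; lia.
by case: p py xab => ? ? /= /eqP->.
Qed.

Lemma vseg_cons x a b : a <= b -> vseg x a b = (x, a) :: vseg x a.+1 b.
Proof. by move=> ab; rewrite /vseg subSn. Qed.

Lemma head_hseg x0 y a b : a <= b -> head x0 (hseg y a b) = (a, y).
Proof. by move=> ab; rewrite /hseg subSn. Qed.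

Lemma hseg_neq0 y a b : hseg y a b != [::] -> a <= b.
Proof. by rewrite -size_eq0 size_map size_iota; lia. Qed.

Lemma last_vseg x0 x a b : a <= b -> last x0 (vseg x a b) = (x, b).
Proof.
move=> ab; rewrite vseg_cons //= /vseg subSS.
by rewrite (last_map (fun y => (x, y))) last_iota subnKC.
Qed.

Lemma sorted_vseg x a b : sorted up_right (vseg x a b).
Proof.
rewrite /vseg; case: (b.+1 - a) => //= k.
by apply: (path_map_iota (f := fun y => (x, y))) => y; rewrite /up_right eqxx orbT.
Qed.

Lemma sorted_hseg y a b : sorted up_right (hseg y a b).
Proof.
rewrite /hseg; case: (b.+1 - a) => //= k.
by apply: (path_map_iota (f := fun x => (x, y))) => x; rewrite /up_right eqxx.
Qed.

Section Drawing.

Variables (n : nat) (e : rel 'I_n).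

(* The vertex numbered c, i.e. c.-1 : 'I_n, is a neighbour of v. *)
Definition nbr_at (c : nat) (v : 'I_n) : bool :=
  [exists u : 'I_n, (u.+1 == c) && e u v].

Lemma nbr_at0 v : nbr_at 0 v = false.
Proof. by apply/existsP=> -[u /andP[]]. Qed.

Lemma nbr_atS (u v : 'I_n) : nbr_at u.+1 v = e u v.
Proof.
apply/existsP/idP => [[w /andP[/eqP [wu] ewv]] | euv]; last by exists u; rewrite eqxx.
by rewrite (_ : u = w) //; apply: val_inj.
Qed.

Definition step_height (v : 'I_n) (c : nat) : nat :=
  if (v.+1 <= c) || nbr_at c v then 2 * c else (2 * c).+1.

Definition stair_column (v : 'I_n) (c : nat) : seq gpoint :=
  vseg (2 * v.+1 + c) (step_height v c.-1) (step_height v c).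

Definition staircase (v : 'I_n) (k : nat) : seq gpoint :=
  flatten [seq stair_column v c | c <- iota 1 k].

Definition vertex_path (v : 'I_n) : seq gpoint :=
  staircase v v.+1 ++ hseg (2 * v.+1) (3 * v.+1).+1 (3 * n).

Section OneVertex.

Variable v : 'I_n.

Lemma step_height_bounds c : 2 * c <= step_height v c <= (2 * c).+1.
Proof. by rewrite /step_height; case: ifP; lia. Qed.

Lemma step_height_high c : v.+1 <= c -> step_height v c = 2 * c.
Proof. by rewrite /step_height => ->. Qed.

Lemma step_height0 : step_height v 0 = 1.
Proof. by rewrite /step_height nbr_at0. Qed.

Lemma step_height_flat c : c <= v -> (step_height v c == 2 * c) = nbr_at c v.
Proof.
by rewrite /step_height -ltnS ltnNge => /negbTE->; case: nbr_at => /=; lia.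
Qed.

Lemma step_height_pred c : step_height v c.-1 <= step_height v c.
Proof.
case: c => [|c] //=; have := step_height_bounds c; have := step_height_bounds c.+1; lia.
Qed.

Lemma staircase_shape k : sorted up_right (staircase v k.+1) /\
  last (0, 0) (staircase v k.+1) = (2 * v.+1 + k.+1, step_height v k.+1).
Proof.
have col_last x0 c : last x0 (stair_column v c) = (2 * v.+1 + c, step_height v c).
  exact/last_vseg/step_height_pred.
elim: k => [|k [IHs IHl]]; first by rewrite /staircase /= cats0 sorted_vseg col_last.
rewrite /staircase -[k.+2]addn1 iotaD map_cat flatten_cat -/(staircase v k.+1).
rewrite [flatten _]/= cats0 add1n addn1.
split; last by rewrite last_cat col_last.
apply: (sorted_cat_link (x0 := (0, 0))) IHs (sorted_vseg _ _ _) _ => _ _.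
by rewrite IHl /stair_column vseg_cons ?step_height_pred //= /up_right addnS eqxx.
Qed.

Lemma step_height_pos c : 0 < step_height v c.
Proof. by case: c => [|c]; rewrite ?step_height0 //; have := step_height_bounds c.+1; lia. Qed.

Lemma step_height_le c : c <= v.+1 -> step_height v c <= 2 * v.+1.
Proof.
rewrite leq_eqVlt => /predU1P[-> | lt_cv]; first by rewrite step_height_high.
by have := step_height_bounds c; lia.
Qed.

Lemma vertex_path_sorted : sorted up_right (vertex_path v).
Proof.
have [stair_sorted stair_last] := staircase_shape v.
apply: (sorted_cat_link (x0 := (0, 0))) stair_sorted (sorted_hseg _ _ _) _ => _.
move=> /hseg_neq0 ray; rewrite stair_last head_hseg // step_height_high //.
by rewrite addnC -mulSn /up_right eqxx.
Qed.

Lemma vertex_path_neq0 : vertex_path v != [::].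
Proof.
by rewrite /vertex_path /staircase /= /stair_column vseg_cons // step_height_pred.
Qed.

Lemma mem_vertex_path p : p \in vertex_path v <->
  (exists c, [/\ 0 < c <= v.+1, p.1 = 2 * v.+1 + c &
                 step_height v c.-1 <= p.2 <= step_height v c])
  \/ (p.2 = 2 * v.+1 /\ 3 * v.+1 < p.1 <= 3 * n).
Proof.
rewrite mem_cat mem_hseg; split.
- case/orP => [/flattenP [s /mapP [c cv ->]] | /andP [/eqP p2 p1]]; last by right.
  rewrite mem_vseg => /andP[/eqP p1 p2]; left; exists c.
  by split => //; move: cv; rewrite mem_iota; lia.
- case => [[c [cv p1 p2]] | [-> p1]]; last by rewrite eqxx p1 orbT.
  apply/orP; left; apply/flattenP; exists (stair_column v c).
    by apply/mapP; exists c => //; rewrite mem_iota; lia.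
  by rewrite mem_vseg p1 eqxx.
Qed.

Lemma vertex_path_in_grid p : p \in vertex_path v -> in_grid (3 * n) (2 * n) p.
Proof.
have := ltn_ord v; case: p => x y; rewrite /in_grid /=.
move=> vn /mem_vertex_path [[c [cv /= -> y_c]] | [/= -> x_ray]].
  have := step_height_pos c.-1; have /step_height_le := proj2 (andP cv); lia.
lia.
Qed.

End OneVertex.

Lemma common_point_vertex_paths (u v : 'I_n) p : u < v ->
  p \in vertex_path u -> p \in vertex_path v ->
  p.2 = 2 * u.+1 /\ exists c, [/\ 0 < c <= v.+1, p.1 = 2 * v.+1 + c &
     step_height v c.-1 <= 2 * u.+1 <= step_height v c].
Proof.
case: p => x y uv /mem_vertex_path Pu /mem_vertex_path Pv /=.
have := ltn_ord v.
case: Pu => [[c [cu /= xu yu]] | [/= yu xu]]; case: Pv => [[d [dv /= xv yv]] | [/= yv xv]].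
- have := step_height_bounds u c; have := step_height_bounds u c.-1.
  have := step_height_bounds v d; have := step_height_bounds v d.-1; lia.
- have := step_height_bounds u c; have := step_height_le (proj2 (andP cu)); lia.
- by split=> //; exists d; split=> //; rewrite -yu.
- lia.
Qed.

Lemma edge_iff_vertex_paths_share_step (u v : 'I_n) : u < v ->
  e u v <-> exists p q, [/\ up_right p q, p \in vertex_path u, q \in vertex_path u,
                           p \in vertex_path v & q \in vertex_path v].
Proof.
move=> uv; have := ltn_ord v; split.
- move=> euv; have flat : step_height v u.+1 = 2 * u.+1.
    by apply/eqP; rewrite step_height_flat // nbr_atS.
  have := step_height_bounds v u; have := step_height_bounds v u.+2.
  exists (2 * v.+1 + u.+1, 2 * u.+1), (2 * v.+1 + u.+2, 2 * u.+1).
  split; rewrite ?/up_right /= ?addnS ?eqxx //; apply/mem_vertex_path.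
  + by right; split=> /=; lia.
  + by right; split=> /=; lia.
  + by left; exists u.+1; split=> /=; lia.
  + by left; exists u.+2; split=> /=; lia.
- case=> -[x y] [[x' y'] [pq pu qu pv qv]].
  have [/= yu [c [cv /= xv hc]]] := common_point_vertex_paths uv pu pv.
  have [/= y'u [d [dv /= x'v hd]]] := common_point_vertex_paths uv qu qv.
  case/orP: pq => /eqP [x'x y'y]; last by lia.
  have dc : d = c.+1 by lia.
  rewrite dc /= in hd; have := step_height_bounds v c => c_bounds.
  have uc : u.+1 = c by lia.
  by rewrite -nbr_atS uc -step_height_flat; [apply/eqP | ]; lia.
Qed.

End Drawing.

Theorem theorem3 (n : nat) (e : rel 'I_n) (e_sym : symmetric e)
  (e_irr : irreflexive e) :
  exists P : 'I_n -> seq gpoint, xyp_EPG_rep e (3 * n) (2 * n) P.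
Proof.
exists (vertex_path e); split=> [v | u v neq_uv].
  have v_sorted := vertex_path_sorted e v.
  split; last exact: up_right_xyp_monotone.
  split; [exact: vertex_path_neq0 | exact/allP/vertex_path_in_grid | | exact: up_right_uniq].
  by case: (vertex_path e v) v_sorted => //= x s; exact: (sub_path up_right_gadj).
rewrite share_edge_up_right ?vertex_path_sorted //.
case: (ltngtP u v) => [uv | vu | /val_inj eq_uv]; first exact: edge_iff_vertex_paths_share_step.
  rewrite e_sym edge_iff_vertex_paths_share_step //.
  by split=> -[p [q [pq pv qv pu qu]]]; exists p, q.
by rewrite eq_uv eqxx in neq_uv.
Qed.
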